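(* Let $\mathcal A\in\mathbb R^{n\times n\times l}$, $\mathcal X\in\mathbb R^{n\times p\times l}$, $\mathcal B\in\mathbb R^{p\times p\times l}$ and $\mathcal C\in\mathbb R^{n\times p\times l}$. The analytical solution of the t-Sylvester equation $$\mathcal A*\mathcal X+\mathcal X*\mathcal B=\mathcal C$$ is given by $$\operatorname{vec}(\mathcal X)=\big(\widetilde{\operatorname{bcirc}}(\mathcal B)^\top\otimes I_n+[I_p]_{l\times l}\odot\operatorname{bcirc}(\mathcal A)\big)^{\dagger}\operatorname{vec}(\mathcal C).$$
   Context: Frontal slices $A^{(i)}=\mathcal A(:,:,i)$. $\operatorname{bcirc}(\mathcal A)$ is the block circulant matrix whose $(i,j)$ block is $A^{(((i-j)\bmod l)+1)}$; $\widetilde{\operatorname{bcirc}}(\mathcal B)$ is the block matrix whose $(i,j)$ block is $B^{(((j-i)\bmod l)+1)}$ (first block row $B^{(1)},B^{(2)},\dots,B^{(l)}$). The t-product is $\mathcal A*\mathcal B=\operatorname{fold}(\operatorname{bcirc}(\mathcal A)\operatorname{unfold}(\mathcal B))$, with $\operatorname{unfold}$ stacking frontal slices vertically and $\operatorname{fold}$ its inverse. $\operatorname{vec}(\mathcal C)=\mathcal C(:)$ is the column-major vectorization (columns of $C^{(1)}$, then of $C^{(2)}$, and so on). $[I_p]_{l\times l}$ is the $pl\times pl$ block matrix all of whose $p\times p$ blocks are $I_p$. For block matrices $M=[M_{ij}]$ and $N=[N_{ij}]$, both partitioned into $l\times l$ blocks (here $\operatorname{bcirc}(\mathcal A)$ into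 $n\times n$ blocks), the Khatri–Rao product $M\odot N$ is the block matrix with $(i,j)$ block $M_{ij}\otimes N_{ij}$. $\otimes$ is the Kronecker product and $\dagger$ the Moore–Penrose inverse. *)

From HB Require Import structures.
From mathcomp Require Import all_boot all_order all_algebra.
Set Warnings "-notation-overridden,-ambiguous-paths".

Set Implicit Arguments. Unset Strict Implicit. Unset Printing Implicit Defensive.
Import Order.TTheory GRing.Theory Num.Theory.
Local Open Scope ring_scope.

Section Defs.
Variable R : pzRingType.

(* entry of a matrix at natural-number indices, 0 when out of range *)
Definition mget m n (M : 'M[R]_(m, n)) (a b : nat) : R :=
  match @insub _ (fun k => k < m)%N 'I_m a, @insub _ (fun k => k < n)%N 'I_n b with
  | Some i, Some j => M i j
  | _, _ => 0%R
  end.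

(* a tensor in R^{m x n x l}: its l frontal slices (0-based) *)
Definition tensor m n l := {ffun 'I_l -> 'M[R]_(m, n)}.

Definition tslice m n l (T : tensor m n l) (k : nat) : 'M[R]_(m, n) :=
  match @insub _ (fun x => x < l)%N 'I_l k with Some i => T i | None => 0%R end.

(* bcirc A : block (i,j) (0-based) is slice ((i - j) mod l) *)
Definition bcirc m n l (A : tensor m n l) : 'M[R]_(l * m, l * n) :=
  \matrix_(r, c) mget (tslice A ((r %/ m + l - c %/ n) %% l)%N) (r %% m)%N (c %% n)%N.

(* tilde-bcirc B : block (i,j) (0-based) is slice ((j - i) mod l) *)
Definition bcirct m n l (B : tensor m n l) : 'M[R]_(l * m, l * n) :=
  \matrix_(r, c) mget (tslice B ((c %/ n + l - r %/ m) %% l)%N) (r %% m)%N (c %% n)%N.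

(* unfold: stack frontal slices vertically *)
Definition tunfold m n l (B : tensor m n l) : 'M[R]_(l * m, n) :=
  \matrix_(r, c) mget (tslice B (r %/ m)%N) (r %% m)%N c.

Definition tfold m n l (M : 'M[R]_(l * m, n)) : tensor m n l :=
  [ffun k : 'I_l => \matrix_(a, b) mget M (k * m + a)%N b].

Definition tprod m n p l (A : tensor m n l) (B : tensor n p l) : tensor m p l :=
  tfold (bcirc A *m tunfold B).

(* column-major vectorization: columns of C^(1), then of C^(2), ... *)
Definition tvec m n l (T : tensor m n l) : 'cV[R]_(l * (n * m)) :=
  \col_r mget (tslice T (r %/ (n * m))%N) ((r %% (n * m)) %% m)%N ((r %% (n * m)) %/ m)%N.

Definition kron m1 n1 m2 n2 (M : 'M[R]_(m1, n1)) (N : 'M[R]_(m2, n2))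
  : 'M[R]_(m1 * m2, n1 * n2) :=
  \matrix_(r, c) (mget M (r %/ m2)%N (c %/ n2)%N * mget N (r %% m2)%N (c %% n2)%N).

Definition mblock l a b (M : 'M[R]_(l * a, l * b)) (i j : nat) : 'M[R]_(a, b) :=
  \matrix_(x, y) mget M (i * a + x)%N (j * b + y)%N.

(* Khatri-Rao product of l x l block matrices: block (i,j) is M_ij (x) N_ij *)
Definition khatri_rao l a b c d (M : 'M[R]_(l * a, l * b)) (N : 'M[R]_(l * c, l * d))
  : 'M[R]_(l * (a * c), l * (b * d)) :=
  \matrix_(r, s) mget (kron (mblock M (r %/ (a * c))%N (s %/ (b * d))%N)
                            (mblock N (r %/ (a * c))%N (s %/ (b * d))%N))
                      (r %% (a * c))%N (s %% (b * d))%N.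

(* [I_p]_{l x l}: all p x p blocks equal to I_p *)
Definition Iblocks l p : 'M[R]_(l * p, l * p) :=
  \matrix_(r, c) ((r %% p)%N == (c %% p)%N)%:R.

Definition is_MP m n (M : 'M[R]_(m, n)) (P : 'M[R]_(n, m)) : Prop :=
  [/\ M *m P *m M = M, P *m M *m P = P,
      (M *m P)^T = M *m P & (P *m M)^T = P *m M].

Definition tsylv_matrix n p l (A : tensor n n l) (B : tensor p p l)
  : 'M[R]_(l * (p * n)) :=
  (castmx (esym (mulnA l p n), esym (mulnA l p n))
         (kron (bcirct B)^T (1%:M : 'M[R]_n))%R
  + khatri_rao (Iblocks l p) (bcirc A))%R.

End Defs.

From Pilot Require Import Defs.
From mathcomp Require Import all_boot all_order all_algebra zify.
Import Order.TTheory GRing.Theory Num.Theory.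
Local Open Scope ring_scope.

(** Computing entrywise, the circulant convolution defining the t-product
    shows that vec(A * X + X * B) = M vec(X) for the coefficient matrix
    M = bcirc~(B)^T (x) I_n + [I_p] (.) bcirc(A), and vec is a bijection.
    The t-Sylvester equation is thus the linear system M v = vec(C), which is
    consistent because X solves it. For a Moore-Penrose inverse P of M,
    M P M = M makes P vec(C) a solution, and since P M is a symmetric
    idempotent, P vec(C) = (P M) vec(X) is the orthogonal projection of
    vec(X), hence no longer than it. *)

(* Matrix entries are read at nat indices of the mixed-radix form [i * m + x]
   (block [i], offset [x]); the [_mixed] lemmas evaluate the constructions of
   [Defs] at such indices. *)

Lemma ltn_mixed {b p a n} : (b < p)%N -> (a < n)%N -> (b * n + a < p * n)%N.
Proof.
move=> lt_bp lt_an; apply: (@leq_trans (b * n + n)); first by rewrite ltn_add2l.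
by rewrite -mulSnr leq_mul2r lt_bp orbT.
Qed.

Lemma divnMDl_small j d t : (t < d)%N -> ((j * d + t) %/ d = j)%N.
Proof.
move=> lt_td; have d_gt0 : (0 < d)%N by apply: leq_ltn_trans lt_td.
by rewrite divnMDl // divn_small // addn0.
Qed.

Lemma modnMDl_small j d t : (t < d)%N -> ((j * d + t) %% d = t)%N.
Proof. by move=> lt_td; rewrite modnMDl modn_small. Qed.

Lemma mixed_radix3 {l p n r} : (r < l * (p * n))%N ->
  exists k b a, [/\ (k < l)%N, (b < p)%N, (a < n)%N
                  & r = k * (p * n) + (b * n + a)]%N.
Proof.
move=> lt_r; have pn_gt0 : (0 < p * n)%N by move: lt_r; rewrite mulnC; case: (p * n)%N.
have n_gt0 : (0 < n)%N by move: pn_gt0; rewrite muln_gt0 => /andP[].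
exists (r %/ (p * n))%N, (r %% (p * n) %/ n)%N, (r %% (p * n) %% n)%N; split.
- by rewrite ltn_divLR.
- by rewrite ltn_divLR // ltn_pmod.
- by rewrite ltn_pmod.
- by rewrite -!divn_eq.
Qed.

Lemma sub_modnK {k l j} : (k < l)%N -> (j < l)%N ->
  ((k + l - (k + l - j) %% l) %% l = j)%N.
Proof.
move=> lt_kl lt_jl; case: (leqP j k) => [le_jk|lt_kj].
  have -> : (k + l - j = (k - j) + l)%N by lia.
  rewrite modnDr (modn_small (m := (k - j)%N)); last by lia.
  have -> : (k + l - (k - j) = j + l)%N by lia.
  by rewrite modnDr modn_small.
rewrite (modn_small (m := (k + l - j)%N)); last by lia.
have -> : (k + l - (k + l - j) = j)%N by lia.
by rewrite modn_small.
Qed.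

Section Tensors.
Context {R : pzRingType}.

Lemma mget_in {m n} (M : 'M[R]_(m, n)) {a b} (lt_am : (a < m)%N) (lt_bn : (b < n)%N) :
  mget M a b = M (Ordinal lt_am) (Ordinal lt_bn).
Proof.
rewrite /mget; case: insubP => [i _ ei|/negP//]; case: insubP => [j _ ej|/negP//].
by congr (M _ _); apply: val_inj.
Qed.

Lemma mget_eq {m n} (M : 'M[R]_(m, n)) {a b : nat} {i : 'I_m} {j : 'I_n} :
  a = i -> b = j -> mget M a b = M i j.
Proof.
move=> -> ->; rewrite (mget_in _ (ltn_ord i) (ltn_ord j)).
by congr (M _ _); apply: val_inj.
Qed.

Lemma mget_out m n (M : 'M[R]_(m, n)) a b :
  ~~ ((a < m) && (b < n))%N -> mget M a b = 0.
Proof.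
rewrite negb_and /mget => /orP[out|out]; first by rewrite insubN.
by case: insubP => // i _ _; rewrite insubN.
Qed.

Lemma mgetD m n (M N : 'M[R]_(m, n)) a b : mget (M + N) a b = mget M a b + mget N a b.
Proof.
have [/andP[lt_am lt_bn]|out] := boolP ((a < m) && (b < n))%N.
  by rewrite !(mget_in _ lt_am lt_bn) mxE.
by rewrite !mget_out ?addr0.
Qed.

Lemma mget_castmx m n m' n' (e : (m = m') * (n = n')) (M : 'M[R]_(m, n)) a b :
  mget (castmx e M) a b = mget M a b.
Proof. by case: e => em en; case: m' / em; case: n' / en; rewrite castmx_id. Qed.

Lemma mget_tr m n (M : 'M[R]_(m, n)) a b : (a < n)%N -> (b < m)%N ->
  mget M^T a b = mget M b a.
Proof. by move=> lt_an lt_bm; rewrite !mget_in mxE. Qed.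

Lemma mget_1 n a b : (a < n)%N -> (b < n)%N -> mget (1%:M : 'M[R]_n) a b = (a == b)%:R.
Proof. by move=> lt_an lt_bn; rewrite mget_in mxE. Qed.

Lemma big_nat_mul_mixed m k (G : nat -> R) :
  \sum_(0 <= c < (m * k)%N) G c = \sum_(j < m) \sum_(t < k) G (j * k + t)%N.
Proof.
elim: m => [|m IHm]; first by rewrite mul0n big_ord0 big_geq.
rewrite mulSnr (@big_cat_nat _ _ _ (m * k)%N) ?leq_addr //= IHm big_ord_recr /=.
congr (_ + _); rewrite -{1}(add0n (m * k)%N) big_addn addKn big_mkord.
by apply: eq_bigr => t _; rewrite addnC.
Qed.

Lemma mget_mulmx m n q (M : 'M[R]_(m, n)) (N : 'M[R]_(n, q)) r c :
  (r < m)%N -> (c < q)%N ->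
  mget (M *m N) r c = \sum_(0 <= t < n) mget M r t * mget N t c.
Proof.
move=> lt_rm lt_cq; rewrite mget_in mxE big_mkord.
apply: eq_bigr => t _.
rewrite (mget_eq M (i := Ordinal lt_rm) (j := t)) //.
by rewrite (mget_eq N (i := t) (j := Ordinal lt_cq)).
Qed.

Lemma tslice_in m n l (T : tensor R m n l) k (lt_kl : (k < l)%N) :
  tslice T k = T (Ordinal lt_kl).
Proof.
by rewrite /tslice; case: insubP => [i _ ei|/negP//]; congr (T _); apply: val_inj.
Qed.

Definition tentry {m n l} (T : tensor R m n l) (k a b : nat) : R :=
  mget (tslice T k) a b.

Lemma tentryD m n l (T1 T2 : tensor R m n l) k a b :
  tentry (T1 + T2) k a b = tentry T1 k a b + tentry T2 k a b.
Proof.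
rewrite /tentry -mgetD /tslice.
by case: insubP => [i _ _|_]; rewrite ?ffunE ?addr0.
Qed.

Lemma big_nat_mul_mixed3 l p n (G : nat -> R) :
  \sum_(0 <= c < (l * (p * n))%N) G c =
  \sum_(j < l) \sum_(b < p) \sum_(a < n) G (j * (p * n) + (b * n + a))%N.
Proof.
rewrite big_nat_mul_mixed; apply: eq_bigr => j _.
by rewrite -(big_mkord xpredT (fun t => G (j * (p * n) + t)%N)) big_nat_mul_mixed.
Qed.

Lemma big_ord_delta {n a} (G : nat -> R) : (a < n)%N ->
  \sum_(i < n) (a == i)%:R * G i = G a.
Proof.
move=> lt_an; rewrite (bigD1 (Ordinal lt_an)) //= eqxx mul1r big1 ?addr0 // => i neq_i.
suff /negbTE-> : a != i by rewrite mul0r.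
by apply: contra neq_i => /eqP eq_ai; apply/eqP/val_inj.
Qed.

Lemma big_sub_modn {l k} (F : nat -> nat -> R) : (k < l)%N ->
  \sum_(j < l) F ((k + l - j) %% l)%N j = \sum_(j < l) F j ((k + l - j) %% l)%N.
Proof.
move=> lt_kl; have l_gt0 : (0 < l)%N by apply: leq_ltn_trans lt_kl.
pose h (j : 'I_l) : 'I_l := Ordinal (ltn_pmod (k + l - j) l_gt0).
have h_inj : injective h.
  move=> i j /(congr1 val) /= eq_ij; apply: ord_inj.
  by rewrite -(sub_modnK lt_kl (ltn_ord i)) eq_ij sub_modnK.
by rewrite (reindex_inj h_inj); apply: eq_bigr => j _ /=; rewrite sub_modnK.
Qed.

Lemma kron_mixed m1 n1 m2 n2 (M : 'M[R]_(m1, n1)) (N : 'M[R]_(m2, n2)) i j x y :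
  (i < m1)%N -> (j < n1)%N -> (x < m2)%N -> (y < n2)%N ->
  mget (kron M N) (i * m2 + x) (j * n2 + y) = mget M i j * mget N x y.
Proof.
move=> lt_i lt_j lt_x lt_y.
rewrite (mget_in _ (ltn_mixed lt_i lt_x) (ltn_mixed lt_j lt_y)) mxE /=.
by rewrite !divnMDl_small // !modnMDl_small.
Qed.

Lemma mblock_mget l a b (M : 'M[R]_(l * a, l * b)) i j x y : (x < a)%N -> (y < b)%N ->
  mget (mblock M i j) x y = mget M (i * a + x) (j * b + y).
Proof. by move=> lt_x lt_y; rewrite (mget_in _ lt_x lt_y) mxE. Qed.

Lemma khatri_rao_mixed l a b c d (M : 'M[R]_(l * a, l * b)) (N : 'M[R]_(l * c, l * d))
    i j x y z w :
  (i < l)%N -> (j < l)%N -> (x < a)%N -> (y < b)%N -> (z < c)%N -> (w < d)%N ->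
  mget (khatri_rao M N) (i * (a * c) + (x * c + z)) (j * (b * d) + (y * d + w))
  = mget M (i * a + x) (j * b + y) * mget N (i * c + z) (j * d + w).
Proof.
move=> lt_i lt_j lt_x lt_y lt_z lt_w.
have lt_xz := ltn_mixed lt_x lt_z; have lt_yw := ltn_mixed lt_y lt_w.
rewrite (mget_in _ (ltn_mixed lt_i lt_xz) (ltn_mixed lt_j lt_yw)) mxE /=.
rewrite !divnMDl_small // !modnMDl_small // kron_mixed //.
by rewrite !mblock_mget.
Qed.

Lemma bcirc_mixed m n l (A : tensor R m n l) i j x y :
  (i < l)%N -> (j < l)%N -> (x < m)%N -> (y < n)%N ->
  mget (bcirc A) (i * m + x) (j * n + y) = tentry A ((i + l - j) %% l) x y.
Proof.
move=> lt_i lt_j lt_x lt_y.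
rewrite (mget_in _ (ltn_mixed lt_i lt_x) (ltn_mixed lt_j lt_y)) mxE /=.
by rewrite !divnMDl_small // !modnMDl_small.
Qed.

Lemma bcirct_mixed m n l (B : tensor R m n l) i j x y :
  (i < l)%N -> (j < l)%N -> (x < m)%N -> (y < n)%N ->
  mget (bcirct B) (i * m + x) (j * n + y) = tentry B ((j + l - i) %% l) x y.
Proof.
move=> lt_i lt_j lt_x lt_y.
rewrite (mget_in _ (ltn_mixed lt_i lt_x) (ltn_mixed lt_j lt_y)) mxE /=.
by rewrite !divnMDl_small // !modnMDl_small.
Qed.

Lemma Iblocks_mixed l p i j x y :
  (i < l)%N -> (j < l)%N -> (x < p)%N -> (y < p)%N ->
  mget (Iblocks R l p) (i * p + x) (j * p + y) = (x == y)%:R.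
Proof.
move=> lt_i lt_j lt_x lt_y.
by rewrite (mget_in _ (ltn_mixed lt_i lt_x) (ltn_mixed lt_j lt_y)) mxE /= !modnMDl_small.
Qed.

Lemma tunfold_mixed m n l (X : tensor R m n l) j x y :
  (j < l)%N -> (x < m)%N -> (y < n)%N ->
  mget (tunfold X) (j * m + x) y = tentry X j x y.
Proof.
move=> lt_j lt_x lt_y.
by rewrite (mget_in _ (ltn_mixed lt_j lt_x) lt_y) mxE /= divnMDl_small // modnMDl_small.
Qed.

Lemma tentry_tfold m n l (M : 'M[R]_(l * m, n)) k a b :
  (k < l)%N -> (a < m)%N -> (b < n)%N ->
  tentry (tfold M) k a b = mget M (k * m + a) b.
Proof. by move=> lt_k lt_a lt_b; rewrite /tentry tslice_in ffunE mget_in mxE. Qed.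

Lemma tvec_mixed n p l (X : tensor R n p l) k b a :
  (k < l)%N -> (b < p)%N -> (a < n)%N ->
  mget (tvec X) (k * (p * n) + (b * n + a)) 0 = tentry X k a b.
Proof.
move=> lt_k lt_b lt_a.
rewrite (mget_in _ (ltn_mixed lt_k (ltn_mixed lt_b lt_a)) (ltn0Sn 0)) mxE /=.
by rewrite divnMDl_small ?modnMDl_small ?ltn_mixed // divnMDl_small // modnMDl_small.
Qed.

Lemma tentry_tprod m n p l (A : tensor R m n l) (X : tensor R n p l) k a b :
  (k < l)%N -> (a < m)%N -> (b < p)%N ->
  tentry (tprod A X) k a b =
  \sum_(j < l) \sum_(t < n) tentry A ((k + l - j) %% l) a t * tentry X j t b.
Proof.
move=> lt_k lt_a lt_b.
rewrite /tprod tentry_tfold // mget_mulmx ?ltn_mixed // big_nat_mul_mixed.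
by apply: eq_bigr => j _; apply: eq_bigr => t _; rewrite bcirc_mixed // tunfold_mixed.
Qed.

Definition tunvec {n p l} (v : 'cV[R]_(l * (p * n))) : tensor R n p l :=
  [ffun k : 'I_l => \matrix_(a < n, b < p) mget v (k * (p * n) + (b * n + a)) 0].

Lemma eq_cV_mixed l p n (u v : 'cV[R]_(l * (p * n))) :
  (forall k b a, (k < l)%N -> (b < p)%N -> (a < n)%N ->
     mget u (k * (p * n) + (b * n + a)) 0 = mget v (k * (p * n) + (b * n + a)) 0) ->
  u = v.
Proof.
move=> eq_uv; apply/matrixP => r z; rewrite (ord1 z).
have [k [b [a [lt_k lt_b lt_a er]]]] := mixed_radix3 (ltn_ord r).
rewrite -(mget_eq u (j := ord0) (esym er) (erefl 0%N)).
by rewrite -(mget_eq v (j := ord0) (esym er) (erefl 0%N)) eq_uv.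
Qed.

Lemma tvec_tunvec n p l (v : 'cV[R]_(l * (p * n))) : tvec (tunvec v) = v.
Proof.
apply: eq_cV_mixed => k b a lt_k lt_b lt_a.
by rewrite tvec_mixed // /tentry tslice_in ffunE mget_in mxE.
Qed.

Lemma tunvec_tvec n p l (X : tensor R n p l) : tunvec (tvec X) = X.
Proof.
apply/ffunP => k; apply/matrixP => a b.
rewrite ffunE mxE tvec_mixed // /tentry tslice_in.
rewrite (mget_eq _ (erefl (a : nat)) (erefl (b : nat))).
by congr (X _ _ _); apply: val_inj.
Qed.

Lemma tvec_inj n p l : injective (@tvec R n p l).
Proof. exact: can_inj (@tunvec_tvec n p l). Qed.

End Tensors.

Section Sylvester.
Context {R : comPzRingType}.

Lemma tsylv_matrix_mixed n p l (A : tensor R n n l) (B : tensor R p p l) k b a j b' a' :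
  (k < l)%N -> (b < p)%N -> (a < n)%N -> (j < l)%N -> (b' < p)%N -> (a' < n)%N ->
  mget (tsylv_matrix A B) (k * (p * n) + (b * n + a)) (j * (p * n) + (b' * n + a'))
  = tentry B ((k + l - j) %% l) b' b * (a == a')%:R
    + (b == b')%:R * tentry A ((k + l - j) %% l) a a'.
Proof.
move=> lt_k lt_b lt_a lt_j lt_b' lt_a'.
rewrite mgetD mget_castmx khatri_rao_mixed // Iblocks_mixed // bcirc_mixed //.
have kron_index i x y : (i * (p * n) + (x * n + y) = (i * p + x) * n + y)%N.
  by rewrite mulnA addnA -mulnDl.
rewrite !kron_index kron_mixed ?ltn_mixed // mget_tr ?ltn_mixed //.
by rewrite bcirct_mixed // mget_1.
Qed.

Lemma tvec_tsylv n p l (A : tensor R n n l) (B : tensor R p p l) (X : tensor R n p l) :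
  tvec (tprod A X + tprod X B) = tsylv_matrix A B *m tvec X.
Proof.
apply: eq_cV_mixed => k b a lt_k lt_b lt_a.
pose c j := ((k + l - j) %% l)%N.
have A_part : \sum_(j < l) \sum_(s < p) \sum_(t < n)
      (b == s)%:R * tentry A (c j) a t * tentry X j t s
    = \sum_(j < l) \sum_(t < n) tentry A (c j) a t * tentry X j t b.
  apply: eq_bigr => j _; rewrite exchange_big; apply: eq_bigr => t _ /=.
  under eq_bigr => s _ do rewrite -mulrA.
  exact: (big_ord_delta (fun s => tentry A (c j) a t * tentry X j t s) lt_b).
have B_part : \sum_(j < l) \sum_(s < p) \sum_(t < n)
      tentry B (c j) s b * (a == t)%:R * tentry X j t s
    = \sum_(j < l) \sum_(s < p) tentry X (c j) a s * tentry B j s b.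
  rewrite (big_sub_modn (fun u v => \sum_(s < p) tentry X u a s * tentry B v s b) lt_k).
  apply: eq_bigr => j _; apply: eq_bigr => s _.
  under eq_bigr => t _ do rewrite mulrAC mulrC.
  by rewrite (big_ord_delta (fun t => tentry B (c j) s b * tentry X j t s) lt_a) mulrC.
rewrite tvec_mixed // tentryD !tentry_tprod // -/c -A_part -B_part addrC.
rewrite mget_mulmx ?ltn_mixed // big_nat_mul_mixed3 -big_split; apply: eq_bigr => j _.
rewrite -big_split; apply: eq_bigr => s _; rewrite -big_split; apply: eq_bigr => t _ /=.
by rewrite tsylv_matrix_mixed // tvec_mixed // mulrDl.
Qed.

End Sylvester.

Section LeastNorm.
Context {R : realDomainType}.

Lemma sqnorm_proj_le n (Q : 'M[R]_n) (x : 'cV[R]_n) : Q^T = Q -> Q *m Q = Q ->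
  \sum_i ((Q *m x) i 0) ^+ 2 <= \sum_i (x i 0) ^+ 2.
Proof.
move=> symQ idemQ; set y := Q *m x; set z := x - y.
have y_perp_z : \sum_i y i 0 * z i 0 = 0.
  transitivity ((y^T *m z) 0 0).
    by rewrite [RHS]mxE; apply: eq_bigr => i _; rewrite [y^T _ _]mxE.
  by rewrite /z /y trmx_mul symQ mulmxBr mulmxA -(mulmxA x^T Q Q) idemQ subrr mxE.
have -> : \sum_i (x i 0) ^+ 2 = \sum_i (y i 0 + z i 0) ^+ 2.
  by apply: eq_bigr => i _; rewrite /z !mxE addrCA subrr addr0.
under [X in _ <= X]eq_bigr => i _ do rewrite sqrrD.
rewrite !big_split /= y_perp_z !addr0 lerDl.
by apply: sumr_ge0 => i _; apply: sqr_ge0.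
Qed.

Lemma is_MP_least_norm m n (M : 'M[R]_(m, n)) (P : 'M[R]_(n, m)) (x : 'cV[R]_n) :
  is_MP M P -> \sum_i ((P *m (M *m x)) i 0) ^+ 2 <= \sum_i (x i 0) ^+ 2.
Proof.
case=> _ PMP _ symPM; rewrite mulmxA; apply: sqnorm_proj_le => //.
by rewrite mulmxA PMP.
Qed.

End LeastNorm.

Theorem mainTheorem19 (R : realFieldType) (n p l : nat)
  (A : tensor R n n l) (B : tensor R p p l) (C : tensor R n p l)
  (P : 'M[R]_(l * (p * n))) :
  is_MP (tsylv_matrix A B) P ->
  forall X : tensor R n p l, tprod A X + tprod X B = C ->
  exists X0 : tensor R n p l,
    [/\ tvec X0 = P *m tvec C,
        tprod A X0 + tprod X0 B = C
      & \sum_i (tvec X0 i 0) ^+ 2 <= \sum_i (tvec X i 0) ^+ 2].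
Proof.
move=> MP X solX.
have vecC : tvec C = tsylv_matrix A B *m tvec X by rewrite -solX tvec_tsylv.
exists (tunvec (P *m tvec C)); rewrite tvec_tunvec; split=> //.
- apply: tvec_inj; rewrite tvec_tsylv tvec_tunvec vecC.
  by case: MP => MPM _ _ _; rewrite !mulmxA MPM.
- by rewrite vecC is_MP_least_norm.
Qed.
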